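(* Let $P_{2n+1}$ ($n\ge 1$) be a weighted path with vertices $v_1,\dots,v_{2n+1}$ and edges $v_iv_{i+1}$, $1\le i\le 2n$. Then: (i) $P_{2n+1}$ is a spanning subtree of $P_{2n+1}^{\#}$ (i.e. each $v_iv_{i+1}$ is an edge of $P_{2n+1}^{\#}$); (ii) $v_iv_j$ is an edge of $P_{2n+1}^{\#}$ if and only if $i+j$ is odd; (iii) for $n\ge 2$, $P_{2n+1}^{\#}$ has no pendant vertices.
   Context: A weighted graph has a nonzero real weight on each edge; its adjacency matrix $A$ has $(i,j)$ entry equal to the weight of edge $v_iv_j$, or $0$ if no edge. $A^{\#}$ is the group inverse of $A$ (unique $X$ with $AXA=A$, $XAX=X$, $AX=XA$); the group inverse graph $G^{\#}$ is the weighted graph on the same vertex set with $v_iv_j$ an edge iff $(A^{\#})_{ij}\neq 0$, weighted by that entry. A subgraph relation between weighted graphs refers to their underlying graphs. A pendant vertex is a vertex of degree one. *)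

From HB Require Import structures.
From mathcomp Require Import all_boot all_order all_algebra.
Set Implicit Arguments. Unset Strict Implicit. Unset Printing Implicit Defensive.
Import Order.TTheory GRing.Theory Num.Theory.
Local Open Scope ring_scope.

(* Adjacency matrix of the weighted path on N vertices (0-based) v_0,...,v_(N-1),
   with edge v_k v_(k+1) of weight w k. *)
Definition path_adj (R : nzRingType) (N : nat) (w : nat -> R) : 'M[R]_N :=
  \matrix_(i < N, j < N)
    if (j == i.+1 :> nat) then w i
    else if (i == j.+1 :> nat) then w j else 0.

Definition group_inverse (R : nzRingType) (N : nat) (A X : 'M[R]_N) : Prop :=
  [/\ A *m X *m A = A, X *m A *m X = X & A *m X = X *m A].

(* Underlying graph of the weighted graph with adjacency matrix X:
   v_i v_j is an edge iff i <> j and X i j <> 0. *)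
Definition wedge (R : nzRingType) (N : nat) (X : 'M[R]_N) (i j : 'I_N) : bool :=
  (i != j) && (X i j != 0).

Definition wdegree (R : nzRingType) (N : nat) (X : 'M[R]_N) (i : 'I_N) : nat :=
  #|[set j | wedge X i j]|.

From HB Require Import structures.
From mathcomp Require Import all_boot all_order all_algebra.
From mathcomp Require Import zify ring.
(* The path is bipartite between even and odd vertices (numbered from 0), and
   its adjacency matrix A has a kernel vector z vanishing on odd vertices, with
   z_(2m) = ker_coef m fixed by w_(2m) z_(2m) + w_(2m+1) z_(2m+2) = 0.  As A is
   symmetric, a symmetric X with A z = X z = 0 and A X = I - z z^T / |z|^2 is
   its group inverse.  Solving the two-term recurrences given by the rows of
   A X produces such an X supported on the pairs of opposite parity:
     X_(2k+1,2m) = (S_k - [m <= k] S_n) z_(2m) / (w_(2k+1) z_(2k+2) S_n),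
   where S_k = z_0^2 + z_2^2 + ... + z_(2k)^2.  Since 0 < S_k < S_n for k < n,
   none of these entries vanishes, so v_i v_j is an edge of the group inverse
   graph exactly when i + j is odd. *)

Set Implicit Arguments. Unset Strict Implicit. Unset Printing Implicit Defensive.
Import Order.TTheory GRing.Theory Num.Theory.
Local Open Scope ring_scope.

Lemma group_inverse_unique (R : nzRingType) (N : nat) (A X Y : 'M[R]_N) :
  group_inverse A X -> group_inverse A Y -> X = Y.
Proof.
move=> [AXA XAX AXC] [AYA YAY AYC].
have AX_YA : A *m X = Y *m A.
  by rewrite -{1}AYA AYC -!mulmxA AXC (mulmxA A X A) AXA.
have AX_AY : A *m X = A *m Y by rewrite AX_YA AYC.
by rewrite -XAX -mulmxA AX_AY mulmxA -AXC AX_AY AYC YAY.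
Qed.

Lemma sym_group_inverse (R : comNzRingType) (N : nat) (A X : 'M[R]_N)
    (z : 'cV[R]_N) (c : R) :
  A^T = A -> X^T = X -> A *m z = 0 -> X *m z = 0 ->
  A *m X = 1%:M - c *: (z *m z^T) -> group_inverse A X.
Proof.
move=> symA symX Az0 Xz0 AXE.
have zTA : z^T *m A = 0 by rewrite -symA -trmx_mul Az0 trmx0.
have zTX : z^T *m X = 0 by rewrite -symX -trmx_mul Xz0 trmx0.
have XAE : X *m A = A *m X.
  rewrite -[X in X *m _]symX -[A in _ *m A]symA -trmx_mul AXE.
  by rewrite linearB /= trmx1 linearZ /= trmx_mul trmxK.
split=> //; [rewrite AXE | rewrite XAE AXE];
  by rewrite mulmxBl mul1mx -scalemxAl -mulmxA ?zTA ?zTX mulmx0 scaler0 subr0.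
Qed.

Lemma sum_if_eq_nat (R : nzRingType) (N a : nat) (x : R) :
  \sum_(j < N) (if (j : nat) == a then x else 0) = if (a < N)%N then x else 0.
Proof.
rewrite -big_mkcond; case: ltnP => aN; first by rewrite (big_pred1 (Ordinal aN)).
by rewrite big_pred0 // => j; apply/negbTE; have := ltn_ord j; lia.
Qed.

Lemma sum_even_half (V : nmodType) (f : nat -> V) (n : nat) :
  \sum_(j < n.*2.+1) (if odd j then 0 else f j./2) = \sum_(m < n.+1) f m.
Proof.
elim: n => [|n IH]; first by rewrite !big_ord1.
rewrite doubleS (big_ord_recr n.*2.+2) (big_ord_recr n.*2.+1) /= IH.
by rewrite [RHS]big_ord_recr /= odd_double /= addr0 half_double.
Qed.

Section PathAdjacency.

Variables (R : nzRingType) (N : nat) (w : nat -> R).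

Lemma path_adj_sym : (path_adj N w)^T = path_adj N w.
Proof.
apply/matrixP => i j; rewrite !mxE.
by case: (eqVneq (i : nat) j.+1); case: (eqVneq (j : nat) i.+1) => //; lia.
Qed.

Definition path_adj_act (f : nat -> R) (a : nat) : R :=
  (if (0 < a)%N then w a.-1 * f a.-1 else 0) +
  (if (a.+1 < N)%N then w a * f a.+1 else 0).

Lemma mulmx_path_adj_entry M (B : 'M[R]_(N, M)) (f : nat -> R) i k :
  (forall j : 'I_N, B j k = f j) -> (path_adj N w *m B) i k = path_adj_act f i.
Proof.
move=> Bf; rewrite mxE.
under eq_bigr => j _ do rewrite !mxE Bf.
rewrite (eq_bigr (fun j : 'I_N => (if (j : nat) == i.+1 then w i * f i.+1 else 0) +
    (if (j : nat) == i.-1 then (if (0 < i)%N then w i.-1 * f i.-1 else 0) else 0))).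
  rewrite big_split !sum_if_eq_nat /path_adj_act addrC.
  by case: posnP => // _; rewrite (leq_ltn_trans (leq_pred i)).
move=> j _; case: (eqVneq (j : nat) i.+1) => [->|_].
  by rewrite (_ : (i.+1 == i.-1) = false) ?addr0 //; lia.
rewrite add0r; case: (eqVneq (i : nat) j.+1) => [->|ij] /=; first by rewrite eqxx.
by rewrite mul0r; case: eqP => // ji; case: posnP => //; lia.
Qed.

End PathAdjacency.

Lemma parity_degree_gt1 (R : nzRingType) (N : nat) (X : 'M[R]_N) :
  (3 < N)%N -> (forall i j, wedge X i j = odd (i + j)) ->
  forall i, (1 < wdegree X i)%N.
Proof.
move=> N_gt3 parX i; apply/card_gt1P.
have [j1 [j2 [odd1 odd2 j12]]] :
    exists j1 j2 : 'I_N, [/\ odd (i + j1), odd (i + j2) & j1 != j2].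
  have lt0 : (0 < N)%N by lia.
  have lt1 : (1 < N)%N by lia.
  have lt2 : (2 < N)%N by lia.
  case: (boolP (odd i)) => oi.
    by exists (Ordinal lt0), (Ordinal lt2); rewrite !oddD oi.
  by exists (Ordinal lt1), (Ordinal N_gt3); rewrite !oddD (negbTE oi).
by exists j1, j2; rewrite !inE !parX.
Qed.

Section OddPathGroupInverse.

Variables (R : realFieldType) (n : nat) (w : nat -> R).
Hypothesis w_neq0 : forall k, (k < n.*2)%N -> w k != 0.

Lemma w_odd_neq0 k : (k < n)%N -> w k.*2.+1 != 0.
Proof. by move=> lt_kn; apply: w_neq0; lia. Qed.

Fixpoint ker_coef (m : nat) : R :=
  if m is m'.+1 then - (w m'.*2 / w m'.*2.+1) * ker_coef m' else 1.

Lemma ker_coef0 : ker_coef 0 = 1. Proof. by []. Qed.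

Lemma ker_coefS m : ker_coef m.+1 = - (w m.*2 / w m.*2.+1) * ker_coef m.
Proof. by []. Qed.

Arguments ker_coef : simpl never.

Lemma ker_coef_neq0 m : (m <= n)%N -> ker_coef m != 0.
Proof.
elim: m => [|m IH] lt_mn; first by rewrite ker_coef0 oner_neq0.
have w2m : w m.*2 != 0 by apply: w_neq0; lia.
have w2m1 := w_odd_neq0 lt_mn.
have zm := IH (ltnW lt_mn).
by rewrite ker_coefS mulf_neq0 ?oppr_eq0 ?mulf_neq0 ?invr_eq0.
Qed.

Lemma w_even_kerE p : (p < n)%N ->
  w p.*2 = - w p.*2.+1 * ker_coef p.+1 / ker_coef p.
Proof.
move=> lt_pn; have w2p1 := w_odd_neq0 lt_pn.
have zp := ker_coef_neq0 (ltnW lt_pn).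
by rewrite ker_coefS; field; rewrite zp w2p1.
Qed.

Definition ker_norm (k : nat) : R := \sum_(m < k.+1) ker_coef m ^+ 2.

Lemma ker_norm0 : ker_norm 0 = 1.
Proof. by rewrite /ker_norm big_ord1 ker_coef0 expr1n. Qed.

Lemma ker_normS k : ker_norm k.+1 = ker_norm k + ker_coef k.+1 ^+ 2.
Proof. by rewrite /ker_norm big_ord_recr. Qed.

Lemma ker_norm_le k m : (k <= m)%N -> ker_norm k <= ker_norm m.
Proof.
move/subnK <-; elim: (m - k)%N => [|d IH] //.
by rewrite addSn ker_normS (le_trans IH) // lerDl sqr_ge0.
Qed.

Lemma ker_norm_gt0 k : 0 < ker_norm k.
Proof. by rewrite (lt_le_trans _ (ker_norm_le (leq0n k))) // ker_norm0 ltr01. Qed.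

Lemma ker_norm_neq0 k : ker_norm k != 0.
Proof. exact: lt0r_neq0 (ker_norm_gt0 k). Qed.

Lemma ker_norm_lt k : (k < n)%N -> ker_norm k < ker_norm n.
Proof.
move=> lt_kn; rewrite (lt_le_trans _ (ker_norm_le lt_kn)) // ker_normS ltrDl.
by rewrite exprn_even_gt0 // ker_coef_neq0.
Qed.

Definition ginv_coef (k m : nat) : R :=
  (ker_norm k - (if (m <= k)%N then ker_norm n else 0)) * ker_coef m /
  (w k.*2.+1 * ker_coef k.+1 * ker_norm n).

Lemma ginv_coef_neq0 k m : (k < n)%N -> (m <= n)%N -> ginv_coef k m != 0.
Proof.
move=> lt_kn le_mn.
have den_neq0 := mulf_neq0 (mulf_neq0 (w_odd_neq0 lt_kn) (ker_coef_neq0 lt_kn))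
  (ker_norm_neq0 n).
apply: mulf_neq0 (mulf_neq0 _ (ker_coef_neq0 le_mn)) _; last by rewrite invr_eq0.
case: ifP => _; first by rewrite subr_eq0 lt_eqF ?ker_norm_lt.
by rewrite subr0 ker_norm_neq0.
Qed.

Lemma ginv_coef_odd_row p q : (p < n)%N -> (q < n)%N ->
  w p.*2 * ginv_coef q p + w p.*2.+1 * ginv_coef q p.+1 = (p == q)%:R.
Proof.
move=> lt_pn lt_qn.
have w2p1 := w_odd_neq0 lt_pn; have w2q1 := w_odd_neq0 lt_qn.
have zp := ker_coef_neq0 (ltnW lt_pn).
have zp1 := ker_coef_neq0 lt_pn; have zq1 := ker_coef_neq0 lt_qn.
have Sn := ker_norm_neq0 n.
rewrite /ginv_coef (w_even_kerE lt_pn).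
case: ltngtP => [_|_|<-] /=; field.
all: by rewrite ?zp ?zp1 ?w2p1 ?w2q1 ?zq1 ?Sn.
Qed.

Lemma ginv_coef_next p q : (p <= n)%N -> (q <= n)%N ->
  (if (p < n)%N then w p.*2 * ginv_coef p q else 0) =
  ((if (q <= p)%N then ker_norm n else 0) - ker_norm p) * ker_coef q /
  (ker_coef p * ker_norm n).
Proof.
move=> le_pn le_qn; case: ltnP => [lt_pn|ge_pn].
  have w2p1 := w_odd_neq0 lt_pn; have Sn := ker_norm_neq0 n.
  have zp := ker_coef_neq0 le_pn; have zp1 := ker_coef_neq0 lt_pn.
  by rewrite /ginv_coef (w_even_kerE lt_pn); field; rewrite zp zp1 w2p1 Sn.
have -> : p = n by apply/eqP; rewrite eqn_leq le_pn.
by rewrite le_qn subrr !mul0r.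
Qed.

Lemma ginv_coef_prev p q : (p <= n)%N ->
  (if (0 < p)%N then w p.-1.*2.+1 * ginv_coef p.-1 q else 0) =
  (ker_norm p - ker_coef p ^+ 2 - (if (q < p)%N then ker_norm n else 0)) *
  ker_coef q / (ker_coef p * ker_norm n).
Proof.
case: p => [|p] le_pn /=.
  by rewrite ker_norm0 ker_coef0 expr1n subrr subr0 !mul0r.
have w2p1 := w_odd_neq0 le_pn; have Sn := ker_norm_neq0 n.
have zp1 := ker_coef_neq0 le_pn.
by rewrite /ginv_coef ker_normS ltnS; field; rewrite zp1 w2p1 Sn.
Qed.

Lemma ginv_coef_even_row p q : (p <= n)%N -> (q <= n)%N ->
  (if (0 < p)%N then w p.-1.*2.+1 * ginv_coef p.-1 q else 0) +
  (if (p < n)%N then w p.*2 * ginv_coef p q else 0) =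
  (p == q)%:R - (ker_norm n)^-1 * (ker_coef p * ker_coef q).
Proof.
move=> le_pn le_qn; rewrite ginv_coef_prev // ginv_coef_next //.
have zp := ker_coef_neq0 le_pn; have Sn := ker_norm_neq0 n.
by case: ltngtP => [_|_|->] /=; field; rewrite zp Sn.
Qed.

Lemma ginv_coef_ker q : (q < n)%N -> \sum_(m < n.+1) ginv_coef q m * ker_coef m = 0.
Proof.
move=> lt_qn; set c := (w q.*2.+1 * ker_coef q.+1 * ker_norm n)^-1.
rewrite (eq_bigr (fun m : 'I_n.+1 => c * (ker_coef m ^+ 2 * ker_norm q -
    (if (m <= q)%N then ker_coef m ^+ 2 else 0) * ker_norm n))); last first.
  by move=> m _; rewrite /ginv_coef /c; case: ifP => _; ring.
rewrite -mulr_sumr sumrB -!mulr_suml -big_mkcond /=.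
have -> : \sum_(m < n.+1 | (m <= q)%N) ker_coef m ^+ 2 = ker_norm q.
  rewrite /ker_norm (big_ord_widen _ (fun m => ker_coef m ^+ 2) (leqW lt_qn)).
  by apply: eq_bigl => m; rewrite ltnS.
by rewrite -/(ker_norm n) [ker_norm n * _]mulrC subrr mulr0.
Qed.

Definition ker_entry (i : nat) : R := if odd i then 0 else ker_coef i./2.

Definition ginv_entry (i j : nat) : R :=
  if odd i then (if odd j then 0 else ginv_coef i./2 j./2)
  else (if odd j then ginv_coef j./2 i./2 else 0).

Local Notation N := n.*2.+1.

Lemma path_adj_act_ker a : (a < N)%N -> path_adj_act N w ker_entry a = 0.
Proof.
have [p [->|->]] : exists p, a = p.*2 \/ a = p.*2.+1 by exists a./2; lia.
  case: p => [|p] _; rewrite /path_adj_act /ker_entry ?doubleS /= ?odd_double /=;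
  by rewrite !mulr0 ?add0r ?addr0 if_same.
move=> lt_aN; have lt_pn : (p < n)%N by lia.
rewrite /path_adj_act /ker_entry /= odd_double /= half_double ifT; last by lia.
have zp := ker_coef_neq0 (ltnW lt_pn).
by rewrite (w_even_kerE lt_pn); field; rewrite zp.
Qed.

Lemma path_adj_act_ginv a b : (a < N)%N -> (b < N)%N ->
  path_adj_act N w (ginv_entry ^~ b) a =
  (a == b)%:R - (ker_norm n)^-1 * (ker_entry a * ker_entry b).
Proof.
have [p [->|->]] : exists p, a = p.*2 \/ a = p.*2.+1 by exists a./2; lia.
all: have [q [->|->]] : exists q, b = q.*2 \/ b = q.*2.+1 by exists b./2; lia.
all: move=> lt_aN lt_bN; rewrite /path_adj_act /ginv_entry /ker_entry /=.
all: rewrite !odd_double /= ?half_double ?uphalf_double.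
- rewrite (inj_eq double_inj) -ginv_coef_even_row; try lia.
  congr (_ + _); last by rewrite ltnS ltn_double.
  by case: p {lt_aN} => [|p] //; rewrite doubleS /= odd_double /= uphalf_double.
- have -> : (p.*2 == q.*2.+1) = false by lia.
  case: p {lt_aN} => [|p]; rewrite ?doubleS /= ?odd_double /=;
  by rewrite !mulr0 ?add0r ?if_same oppr0.
- have -> : (p.*2.+1 == q.*2) = false by lia.
  by rewrite mul0r !mulr0 add0r if_same subr0.
- have lt_pn : (p < n)%N by lia.
  rewrite ifT; last by lia.
  by rewrite eqSS (inj_eq double_inj) !mulr0 !subr0 ginv_coef_odd_row //; lia.
Qed.

Lemma ginv_entry_ker a : (a < N)%N -> \sum_(j < N) ginv_entry a j * ker_entry j = 0.
Proof.
move=> lt_aN; rewrite /ginv_entry /ker_entry; case: (boolP (odd a)) => odd_a.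
  rewrite (eq_bigr (fun j : 'I_N =>
    if odd j then 0 else ginv_coef a./2 j./2 * ker_coef j./2)).
    rewrite (sum_even_half (fun m => ginv_coef a./2 m * ker_coef m)).
    by rewrite ginv_coef_ker //; lia.
  by move=> j _; case: (odd j); rewrite ?mul0r.
by apply: big1 => j _; case: (odd j); rewrite ?mulr0 ?mul0r.
Qed.

Definition path_ker : 'cV[R]_N := \col_i ker_entry i.

Definition path_ginv : 'M[R]_N := \matrix_(i, j) ginv_entry i j.

Lemma path_ginv_sym : path_ginv^T = path_ginv.
Proof.
by apply/matrixP => i j; rewrite !mxE /ginv_entry; case: (odd i); case: (odd j).
Qed.

Lemma path_adj_ker : path_adj N w *m path_ker = 0.
Proof.
apply/matrixP => i k; rewrite (@mulmx_path_adj_entry _ _ _ _ _ ker_entry).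
  by rewrite mxE path_adj_act_ker.
by move=> j; rewrite mxE.
Qed.

Lemma path_ginv_ker : path_ginv *m path_ker = 0.
Proof.
apply/matrixP => i k; rewrite !mxE -[RHS](ginv_entry_ker (ltn_ord i)).
by apply: eq_bigr => j _; rewrite !mxE.
Qed.

Lemma path_adj_ginv :
  path_adj N w *m path_ginv = 1%:M - (ker_norm n)^-1 *: (path_ker *m path_ker^T).
Proof.
apply/matrixP => i k; rewrite (@mulmx_path_adj_entry _ _ _ _ _ (ginv_entry ^~ k)).
  by rewrite path_adj_act_ginv // !mxE big_ord1 !mxE.
by move=> j; rewrite mxE.
Qed.

Lemma path_ginv_group_inverse : group_inverse (path_adj N w) path_ginv.
Proof.
exact: sym_group_inverse (path_adj_sym _ _) path_ginv_sym path_adj_ker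
  path_ginv_ker path_adj_ginv.
Qed.

Lemma wedge_path_ginv (i j : 'I_N) : wedge path_ginv i j = odd (i + j).
Proof.
have lt_i := ltn_ord i; have lt_j := ltn_ord j.
rewrite /wedge mxE /ginv_entry oddD.
case: (boolP (odd i)) => odd_i; case: (boolP (odd j)) => odd_j /=.
- by rewrite eqxx andbF.
- rewrite ginv_coef_neq0 ?andbT; try lia.
  by apply: contraNneq odd_j => <-.
- rewrite ginv_coef_neq0 ?andbT; try lia.
  by apply: contraNneq odd_i => ->.
- by rewrite eqxx andbF.
Qed.

End OddPathGroupInverse.

Theorem proposition2p14 (R : realFieldType) (n : nat) (w : nat -> R) :
  (1 <= n)%N ->
  (forall k : nat, (k < n.*2)%N -> w k != 0) ->
  let A := path_adj n.*2.+1 w in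
  (exists X, group_inverse A X) /\
  (forall X : 'M[R]_(n.*2.+1), group_inverse A X ->
     [/\ (forall i j : 'I_(n.*2.+1), (j = i.+1 :> nat) -> wedge X i j),
         (forall i j : 'I_(n.*2.+1), wedge X i j = odd (i + j)) &
         ((2 <= n)%N -> forall i : 'I_(n.*2.+1), wdegree X i != 1%N)]).
Proof.
move=> _ w_neq0 A; have ginvA := path_ginv_group_inverse w_neq0.
split; first by exists (path_ginv n w).
move=> X /group_inverse_unique/(_ ginvA) ->.
have parity := wedge_path_ginv w_neq0.
split=> // [i j ji | n_gt1 i].
  by rewrite parity ji addnS /= addnn odd_double.
by rewrite gtn_eqF // parity_degree_gt1 //; lia.
Qed.
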